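(* In the epoch setting described in the context, at least a $\frac{1}{12}$ fraction of the tuples in $S^{(1)}\times S^{(2)}\times\cdots\times S^{(\rho)}$ are $I$-covering for every $I\in\mathcal{I}$ (simultaneously).
   Context: Let $n\ge 2$ and $k\ge1$, $\Delta$ be natural numbers, $\mathcal{G}=\langle G_1,\dots,G_L\rangle$ a temporal graph (sequence of graphs on a common $n$-element vertex set $V$), and $T$ a spanning tree of its underlying graph (the union of the snapshots). A snapshot is $k$-edge-deficient w.r.t. $T$ if it contains all but at most $k$ edges of $T$. Let $N=2(n-1)$, fix a DFS tour of $T$ from a root $r$ traversing each edge twice, with cyclic vertex sequence $(v_1,\dots,v_{N+1})$, $v_{N+1}=v_1=r$, tour edges $e_q=\{v_q,v_{q+1}\}$. Circular intervals: $[\![i,j]\!]=\{i,\dots,j\}$ if $i\le j$, $\{i,\dots,N,1,\dots,j\}$ if $i>j$; $[\![i,j[\![=[\![i,j]\!]\setminus\{j\}$. Roundabout process on a sequence $H_1,\dots,H_t$ of graphs: agents $a_1,\dots,a_N$, $s_i(0)=i$; at step $\tau$, if $s_i(\tau-1)=q$ then $s_i(\tau)=(q\bmod N)+1$ if $e_q\in E(H_\tau)$, else $q$; visited states $D_i(\tau)=[\![i,s_i(\tau)]\!]$, $D_i(0)=\{i\}$; active sets $A(0)=$ all agents, and $A(\tau)$ is obtained from $A(\tau-1)$ by repeatedly removing an arbitrary agent $a_i$ with $D_i(\tau)\subseteq\bigcup D_j(\tau)$ over the other current agents, until none remains. Let $t=\lfloor N/(2k)\rfloor$ and $\rho=\lceil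 18k\ln(6k)\rceil$. Assume an initial part of $[L]$ is partitioned into $\rho$ consecutive intervals (epochs), each containing at least $\Delta+t$ snapshots that are $k$-edge-deficient w.r.t. $T$; each epoch's first $\Delta$ time steps form its repositioning part, and the rest (containing at least $t$ such snapshots) is its roundabout part. In epoch $i$, run the roundabout process for $t$ steps on the first $t$ $k$-edge-deficient snapshots of its roundabout part, let $A^{(i)}$ be the active agents after step $t$ and $S^{(i)}$ their initial states. Let $\bigcup_{i\in[\rho]}S^{(i)}=\{m_1<\dots<m_d\}$, $I_j=[\![m_j,m_{j+1}[\![$ for $j\in[d-1]$, $I_d=[\![m_d,m_1[\![$, and $\mathcal{I}=\{I_1,\dots,I_d\}$. For $I\in\mathcal{I}$, a tuple $(s_1,\dots,s_\rho)\in S^{(1)}\times\cdots\times S^{(\rho)}$ is $I$-missing if for every $i\in[\rho]$ the agent of $A^{(i)}$ with initial state $s_i$ does not visit all states of $I$ in the roundabout process of epoch $i$; it is $I$-covering if it is not $I$-missing. *)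

From Stdlib Require Rdefinitions Raxioms Rpower.
From HB Require Import structures.
From mathcomp Require Import all_boot.
Set Implicit Arguments. Unset Strict Implicit. Unset Printing Implicit Defensive.

Definition is_graph (V : finType) (E : {set {set V}}) : Prop :=
  forall e, e \in E -> #|e| = 2.

Definition tadj (V : finType) (T : {set {set V}}) : rel V :=
  fun x y => [set x; y] \in T.

Definition is_tree (V : finType) (T : {set {set V}}) : Prop :=
  [/\ is_graph T, (forall x y : V, connect (tadj T) x y) & #|T| = #|V|.-1].

Definition tourlen (V : finType) : nat := 2 * (#|V| - 1).

(* Tour of T from r traversing each edge twice, 0-based:
   v 0 = v N = r, tour edge e_q = {v q, v q.+1} (q < N) is an edge of T,
   and each edge of T is traversed exactly twice. *)
Definition is_dfs_tour (V : finType) (T : {set {set V}}) (r : V) (v : nat -> V) : Prop :=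
  [/\ v 0 = r, v (tourlen V) = r,
      (forall q, q < tourlen V -> [set v q; v q.+1] \in T) &
      (forall e, e \in T ->
         #|[set q : 'I_(tourlen V) | [set v q; v q.+1] == e]| = 2)].

Definition deficient (V : finType) (T : {set {set V}}) (k : nat) (E : {set {set V}}) : bool :=
  #|T :\: E| <= k.

Definition cint (N i j : nat) : {set 'I_N} :=
  [set q : 'I_N | if i <= j then (i <= q) && (q <= j) else (i <= q) || (q <= j)].
Definition cint_ho (N i j : nat) : {set 'I_N} :=
  [set q in cint N i j | nat_of_ord q != j].

Fixpoint rstate (V : finType) (N : nat) (v : nat -> V) (H : nat -> {set {set V}})
    (i tau : nat) : nat :=
  match tau with
  | 0 => i
  | tau'.+1 =>
      let q := rstate N v H i tau' in
      if [set v q; v q.+1] \in H tau'.+1 then q.+1 %% N else q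
  end.

Definition visited (V : finType) (N : nat) (v : nat -> V) (H : nat -> {set {set V}})
    (a : 'I_N) (tau : nat) : {set 'I_N} :=
  cint N a (rstate N v H a tau).

(* reduces D A A' : A' is obtained from A by repeatedly removing an (arbitrary)
   agent whose visited set is covered by those of the other current agents,
   until no such agent remains. *)
Inductive reduces (N : nat) (D : 'I_N -> {set 'I_N}) : {set 'I_N} -> {set 'I_N} -> Prop :=
| red_done (A : {set 'I_N}) :
    (forall a, a \in A -> ~~ (D a \subset \bigcup_(b in A :\ a) D b)) ->
    reduces D A A
| red_step (A : {set 'I_N}) (a : 'I_N) (A' : {set 'I_N}) :
    a \in A -> D a \subset \bigcup_(b in A :\ a) D b ->
    reduces D (A :\ a) A' -> reduces D A A'.

Definition roundabout_run (V : finType) (N : nat) (v : nat -> V)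
    (H : nat -> {set {set V}}) (t : nat) (A : nat -> {set 'I_N}) : Prop :=
  A 0 = setT /\
  forall tau, 0 < tau <= t -> reduces (fun a => visited v H a tau) (A tau.-1) (A tau).

(* epoch i (0-based) is the time interval [b i, b i.+1); its repositioning part is
   [b i, b i + Delta), its roundabout part [b i + Delta, b i.+1).
   epoch_graphs ... i tau (tau = 1, 2, ...) is the tau-th k-edge-deficient
   snapshot of the roundabout part of epoch i. *)
Definition epoch_graphs (V : finType) (T : {set {set V}}) (k : nat)
    (G : nat -> {set {set V}}) (b : nat -> nat) (Delta i : nat) : nat -> {set {set V}} :=
  fun tau => G (nth 0 [seq x <- index_iota (b i + Delta) (b i.+1) | deficient T k (G x)] tau.-1).

Definition intervals (N : nat) (M : {set 'I_N}) : seq {set 'I_N} :=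
  let ms := sort leq [seq nat_of_ord q | q <- enum M] in
  [seq cint_ho N (nth 0 ms j) (nth 0 ms (j.+1 %% size ms)) | j <- iota 0 (size ms)].

Definition is_rho (k rho : nat) : Prop :=
  let x := Rdefinitions.Rmult (Rdefinitions.Rmult (Raxioms.INR 18) (Raxioms.INR k))
                              (Rpower.ln (Raxioms.INR (6 * k))) in
  Rdefinitions.Rle x (Raxioms.INR rho) /\
  Rdefinitions.Rlt (Rdefinitions.Rminus (Raxioms.INR rho) (Raxioms.INR 1)) x.

(** In every epoch the roundabout process leaves at most [6k - 1] active
    agents.  Active agents occupy distinct states and at most [2k] tour edges
    are missing from a snapshot, so at most [2k] of them are blocked in a step
    and their total progress after [t] steps is at least [t (|A| - 2k)].  On
    the other hand their visited arcs are irredundant, so every state lies on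
    at most two of them and the arcs have total length at most [2N]; with
    [t = N / 2k] this forces [|A| < 6k].
    The active arcs of an epoch cover the cycle, and an interval [I_j] contains
    no initial state except its left end, so it lies inside one active arc.
    Hence a tuple is [I_j]-missing only if every coordinate avoids one of its
    at most [m] choices, which happens for at most a [((m - 1) / m)^rho]
    fraction of the tuples; there are at most [rho m] intervals, and the choice
    of [rho] gives [12 rho m ((m - 1) / m)^rho <= 11] for some [m >= 6k - 1]. *)

From HB Require Import structures.
From mathcomp Require Import all_boot zify.
From Stdlib Require Reals Lra.

Set Implicit Arguments.
Unset Strict Implicit.
Unset Printing Implicit Defensive.

(** The reals are imported only locally: they rebind [^] on [nat] to [Nat.pow]. *)
Module RhoBound.
Import Reals Lra.
Local Open Scope R_scope.

Lemma exp_INR_mul n y : exp (INR n * y) = exp y ^ n.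
Proof.
elim: n => [|n IH]; first by rewrite Rmult_0_l exp_0.
by rewrite S_INR Rmult_plus_distr_r Rmult_1_l exp_plus IH /=; ring.
Qed.

Lemma INR_expn (m n : nat) : INR (expn m n) = INR m ^ n.
Proof. by elim: n => [|n IH] //; rewrite expnS mult_INR IH. Qed.

Lemma ln_le_sub1 y : 0 < y -> ln y <= y - 1.
Proof. by move=> y_gt0; have := exp_ineq1_le (ln y); rewrite exp_ln //; lra. Qed.

Lemma ln6_gt : 4/3 < ln 6.
Proof.
have e4 : exp (4/3) ^ 3 = exp 1 ^ 4 by rewrite -!exp_INR_mul; f_equal; simpl; lra.
have : exp 1 ^ 4 <= 3 ^ 4 by apply: pow_incr; have := exp_pos 1; have := exp_le_3; lra.
rewrite -e4 => cube_le.
have lt6 : exp (4/3) < 6.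
  by apply: Rnot_le_lt => ge6; have := pow_incr 6 (exp (4/3)) 3; simpl in *; lra.
by rewrite -[4/3]ln_exp; apply: ln_increasing => //; apply: exp_pos.
Qed.

Lemma ln12_le : ln 12 <= 11/3.
Proof.
have e11 : exp (11/3) ^ 3 = exp 1 ^ 11 by rewrite -!exp_INR_mul; f_equal; simpl; lra.
have : 2 ^ 11 <= exp 1 ^ 11 by apply: pow_incr; have := exp_ineq1_le 1; lra.
rewrite -e11 => cube_ge.
have ge12 : 12 <= exp (11/3).
  apply: Rnot_lt_le => lt12; have := exp_pos (11/3).
  by have := pow_incr (exp (11/3)) 12 3; simpl in *; lra.
by apply: Rnot_lt_le => lt; have := exp_increasing _ _ lt; rewrite exp_ln; lra.
Qed.

Lemma ln_le_linear X : 12 <= X -> 36 * ln X <= 11 * X.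
Proof.
move=> X_ge12.
have -> : ln X = ln (X / 12) + ln 12 by rewrite -ln_mult; [f_equal; field | lra | lra].
have := @ln_le_sub1 (X / 12) ltac:(lra).
have := ln12_le; lra.
Qed.

Lemma mul_sqr_le_exp X u : 12 <= X -> 3 * ln X <= u -> 12 * u * X ^ 2 <= 11 * exp u.
Proof.
move=> X_ge12 u_ge; set u0 := 3 * ln X in u_ge.
have ln6_lt : ln 6 < ln X by apply: ln_increasing; lra.
have u0_ge1 : 1 <= u0 by have := ln6_gt; rewrite /u0; lra.
have exp_u0 : exp u0 = X ^ 3.
  by rewrite /u0 (_ : 3 = INR 3) ?exp_INR_mul ?exp_ln //; [lra | simpl; lra].
have exp_u : X ^ 3 * (1 + (u - u0)) <= exp u.
  have -> : exp u = exp u0 * exp (u - u0) by rewrite -exp_plus; f_equal; ring.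
  rewrite exp_u0.
  by apply: Rmult_le_compat_l; [apply: pow_le; lra | apply: exp_ineq1_le].
have lin : 12 * u0 <= 11 * X by have := ln_le_linear X_ge12; rewrite /u0; lra.
have u_le : u <= u0 * (1 + (u - u0)) by nra.
have X2_pos : 0 <= X ^ 2 by apply: pow_le; lra.
have le_u0 : 12 * u * X ^ 2 <= 12 * u0 * (1 + (u - u0)) * X ^ 2 by nra.
have le_X : 12 * u0 * ((1 + (u - u0)) * X ^ 2) <= 11 * X * ((1 + (u - u0)) * X ^ 2).
  by apply: Rmult_le_compat_r => //; apply: Rmult_le_pos; lra.
rewrite (_ : X ^ 3 = X * X ^ 2) in exp_u; [nra | simpl; ring].
Qed.

Lemma pow_sub1_le X n : 1 <= X -> (X - 1) ^ n <= X ^ n * exp (- (INR n / X)).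
Proof.
move=> X_ge1.
rewrite (_ : - (INR n / X) = INR n * - / X); last by field; lra.
rewrite exp_INR_mul -Rpow_mult_distr; apply: pow_incr; split; first lra.
have := exp_ineq1_le (- / X).
have : X * / X = 1 by field; lra.
nra.
Qed.

Lemma rho_bound_real X n : 12 <= X -> 3 * X * ln X <= INR n ->
  12 * INR n * X * (X - 1) ^ n <= 11 * X ^ n.
Proof.
move=> X_ge12 n_ge; set u := INR n / X.
have n_eq : INR n = u * X by rewrite /u; field; lra.
have u_ge : 3 * ln X <= u by apply: (Rmult_le_reg_r X); lra.
have key := mul_sqr_le_exp X_ge12 u_ge.
have sub := pow_sub1_le n (ltac:(lra) : 1 <= X).
have inv : exp u * exp (- u) = 1 by rewrite -exp_plus Rplus_opp_r exp_0.
have Xn_pos : 0 < X ^ n by apply: pow_lt; lra.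
have u_pos : 0 <= u by have := pos_INR n; nra.
apply: (Rle_trans _ (12 * INR n * X * (X ^ n * exp (- u)))).
  by apply: Rmult_le_compat_l => //; have := pos_INR n; nra.
have scaled : 12 * u * X ^ 2 * (X ^ n * exp (- u)) <= 11 * exp u * (X ^ n * exp (- u)).
  by apply: Rmult_le_compat_r => //; have := exp_pos (- u); nra.
have -> : 12 * INR n * X * (X ^ n * exp (- u)) = 12 * u * X ^ 2 * (X ^ n * exp (- u)).
  by rewrite n_eq /=; ring.
have -> : 11 * X ^ n = 11 * X ^ n * (exp u * exp (- u)) by rewrite inv; ring.
rewrite (_ : 11 * X ^ n * _ = 11 * exp u * (X ^ n * exp (- u))); last ring.
exact: scaled.
Qed.

Lemma rho_bound_ge2 (k rho : nat) : (2 <= k)%nat -> is_rho k rho ->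
  (12 * rho * (6 * k) * expn (6 * k - 1) rho <= 11 * expn (6 * k) rho)%nat.
Proof.
move=> k_ge2 [rho_ge _]; apply/leP/INR_le.
rewrite !mult_INR !INR_expn minus_INR ?mult_INR; last by apply/leP; lia.
have [c1 c6 c11 c12 c18] : [/\ INR 1 = 1, INR 6 = 6, INR 11 = 11, INR 12 = 12 & INR 18 = 18].
  by split; simpl; lra.
have k_ge : 2 <= INR k by rewrite (_ : 2 = INR 2); [apply/le_INR/leP | simpl; lra].
rewrite mult_INR c6 c18 in rho_ge; rewrite c1 c6 c11 c12.
by apply: rho_bound_real; lra.
Qed.

Lemma rho_gt24 (rho : nat) : is_rho 1 rho -> (24 < rho)%nat.
Proof.
case=> rho_ge _; apply/leP/INR_lt.
have [c1 c6 c18 c24] : [/\ INR 1 = 1, INR (6 * 1) = 6, INR 18 = 18 & INR 24 = 24].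
  by split; simpl; lra.
by rewrite c1 c6 c18 in rho_ge; rewrite c24; have := ln6_gt; lra.
Qed.
End RhoBound.

Lemma rho_bound_k1 rho : 24 < rho -> 12 * rho * 5 * 4 ^ rho <= 11 * 5 ^ rho.
Proof.
elim: rho => [//|rho IH] rho_gt.
have [->|rho_ge] := eqVneq rho 24; first lia.
have := IH ltac:(lia); rewrite !expnS; move: (4 ^ rho) (5 ^ rho) => P Q; nia.
Qed.

(** For [k = 1] the estimate behind [rho_bound_ge2] would need [ln 6 <= 11/6],
    which holds only by a small margin; instead [m = 5] is checked directly. *)
Lemma rho_margin k rho : 0 < k -> is_rho k rho ->
  exists2 m, 6 * k - 1 <= m & 12 * rho * m * (m - 1) ^ rho <= 11 * m ^ rho.
Proof.
move=> k_gt0 rho_def; have [k_ge2|k_le1] := leqP 2 k.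
  by exists (6 * k); [lia | apply: RhoBound.rho_bound_ge2].
have k1 : k = 1 by lia.
rewrite k1 in rho_def *; exists 5 => //.
exact/rho_bound_k1/RhoBound.rho_gt24.
Qed.

Definition cdist (N x y : nat) : nat := if x <= y then y - x else y + N - x.

Lemma cdist_cases N x y :
  (x <= y /\ cdist N x y = y - x) \/ (y < x /\ cdist N x y = y + N - x).
Proof. by rewrite /cdist; case: leqP; [left | right]. Qed.

Lemma cdistnn N x : cdist N x x = 0.
Proof. by rewrite /cdist leqnn subnn. Qed.

Definition arc N (x : 'I_N) (l : nat) : {set 'I_N} := [set p : 'I_N | cdist N x p <= l].

Lemma cint_arc N (x : 'I_N) y : y < N -> cint N x y = arc x (cdist N x y).
Proof.
move=> y_lt; apply/setP => q; rewrite !inE.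
have := cdist_cases N x q; have := cdist_cases N x y.
have := ltn_ord x; have := ltn_ord q.
by move=> *; case: (leqP x y) => /= xy; apply/idP/idP; lia.
Qed.

Lemma succ_modn_cases N q : q < N ->
  (q.+1 < N /\ q.+1 %% N = q.+1) \/ (q.+1 = N /\ q.+1 %% N = 0).
Proof.
move=> q_lt; have [lt|ge] := ltnP q.+1 N; first by left; rewrite modn_small.
have eN : q.+1 = N by lia.
by right; rewrite eN modnn.
Qed.

Lemma cdist_add_mod N x j : x < N -> j < N -> cdist N x ((x + j) %% N) = j.
Proof.
move=> x_lt j_lt; have [lt|ge] := ltnP (x + j) N.
  by rewrite modn_small // /cdist leq_addr addKn.
have -> : (x + j) %% N = x + j - N by rewrite -{1}(subnK ge) modnDr modn_small //; lia.
by rewrite /cdist; case: leqP; lia.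
Qed.

Lemma leq_card_arc N (x : 'I_N) l : l < N -> l.+1 <= #|arc x l|.
Proof.
move=> l_lt; have N_gt0 : 0 < N by apply: leq_ltn_trans (ltn_ord x).
pose f (j : 'I_l.+1) : 'I_N := Ordinal (ltn_pmod (x + j) N_gt0).
have cdist_f j : cdist N x (f j) = j by apply: cdist_add_mod; have := ltn_ord j; have := ltn_ord x; lia.
have f_inj : injective f.
  by move=> j1 j2 /(congr1 (cdist N x \o val)) /=; rewrite !cdist_f => /val_inj.
rewrite -[l.+1]card_ord -cardsT -(card_imset _ f_inj); apply: subset_leq_card.
by apply/subsetP => _ /imsetP [j _ ->]; rewrite inE cdist_f -ltnS.
Qed.

Lemma mem_arc_through N (x q : 'I_N) l (p : 'I_N) : l < N -> q \in arc x l ->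
  (p \in arc x l) = (cdist N p q <= cdist N x q) || (cdist N q p <= l - cdist N x q).
Proof.
rewrite !inE => l_lt xq.
have := cdist_cases N x p; have := cdist_cases N x q.
have := cdist_cases N p q; have := cdist_cases N q p.
have := ltn_ord x; have := ltn_ord p; have := ltn_ord q.
by move=> *; apply/idP/idP; lia.
Qed.

Lemma arc_subU N (q x y z : 'I_N) (lx ly lz : nat) :
  lx < N -> ly < N -> lz < N ->
  q \in arc x lx -> q \in arc y ly -> q \in arc z lz ->
  (cdist N x q <= cdist N y q) || (cdist N x q <= cdist N z q) ->
  (lx - cdist N x q <= ly - cdist N y q) || (lx - cdist N x q <= lz - cdist N z q) ->
  arc x lx \subset arc y ly :|: arc z lz.
Proof.
move=> lx_lt ly_lt lz_lt qx qy qz before after; apply/subsetP => p.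
rewrite in_setU (mem_arc_through p lx_lt qx) (mem_arc_through p ly_lt qy).
by rewrite (mem_arc_through p lz_lt qz); lia.
Qed.

Lemma arc_nested N (x y s : 'I_N) :
  cdist N y s <= cdist N x s -> arc y (cdist N y s) \subset arc x (cdist N x s).
Proof.
move=> le_yx; apply/subsetP => q; rewrite !inE.
have := cdist_cases N x s; have := cdist_cases N y s.
have := cdist_cases N x q; have := cdist_cases N y q.
have := ltn_ord x; have := ltn_ord y; have := ltn_ord s; have := ltn_ord q.
lia.
Qed.

Lemma three_dominated (a1 a2 a3 b1 b2 b3 : nat) :
  [|| ((a1 <= a2) || (a1 <= a3)) && ((b1 <= b2) || (b1 <= b3)),
      ((a2 <= a1) || (a2 <= a3)) && ((b2 <= b1) || (b2 <= b3)) |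
      ((a3 <= a1) || (a3 <= a2)) && ((b3 <= b1) || (b3 <= b2))].
Proof. lia. Qed.

Definition irredundant (I T : finType) (D : I -> {set T}) (B : {set I}) : Prop :=
  forall a, a \in B -> ~~ (D a \subset \bigcup_(b in B :\ a) D b).

Section IrredundantArcs.

Variables (N : nat) (l : 'I_N -> nat) (B : {set 'I_N}).
Hypothesis l_lt : forall x, l x < N.
Hypothesis B_irr : irredundant (fun x => arc x (l x)) B.

(** Of three arcs through [q], one reaches neither farthest back nor farthest
    forward from [q], so it is covered by the other two. *)
Lemma card_arcs_through_le2 (q : 'I_N) : #|[set x in B | q \in arc x (l x)]| <= 2.
Proof.
rewrite leqNgt; apply/negP => /card_gt2P [x [y [z [[]]]]].
rewrite !inE => /andP [Bx qx] /andP [By qy] /andP [Bz qz] [xy yz zx].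
pose before w := cdist N w q; pose after w := l w - cdist N w q.
have dominated w w1 w2 : w \in B -> w1 \in B -> w2 \in B -> w1 != w -> w2 != w ->
    q \in arc w (l w) -> q \in arc w1 (l w1) -> q \in arc w2 (l w2) ->
    (before w <= before w1) || (before w <= before w2) ->
    (after w <= after w1) || (after w <= after w2) -> False.
  move=> Bw Bw1 Bw2 w1w w2w qw qw1 qw2 hb ha.
  apply: (negP (B_irr Bw)); apply: subset_trans (arc_subU _ _ _ qw qw1 qw2 hb ha) _ => //.
  by apply/subsetP => p /setUP [] p_in; apply/bigcupP;
    [exists w1 | exists w2]; rewrite // !inE ?w1w ?w2w.
have := three_dominated (before x) (before y) (before z) (after x) (after y) (after z).
case/or3P => /andP [hb ha].
- by apply: (dominated x y z); rewrite ?inE // eq_sym.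
- by apply: (dominated y x z); rewrite ?inE // eq_sym.
- by apply: (dominated z x y); rewrite ?inE // eq_sym.
Qed.

Lemma sum_irredundant_arcs_le : \sum_(x in B) (l x).+1 <= 2 * N.
Proof.
apply: (@leq_trans (\sum_(x in B) #|arc x (l x)|)).
  by apply: leq_sum => x _; apply: leq_card_arc.
have -> : \sum_(x in B) #|arc x (l x)| = \sum_p #|[set x in B | p \in arc x (l x)]|.
  under eq_bigr do rewrite -sum1_card.
  rewrite (exchange_big_dep xpredT) //=; apply: eq_bigr => p _.
  by rewrite -sum1_card; apply: eq_bigl => x; rewrite inE.
apply: (@leq_trans (\sum_(p : 'I_N) 2)).
  by apply: leq_sum => p _; apply: card_arcs_through_le2.
by rewrite sum_nat_const card_ord mulnC.
Qed.

End IrredundantArcs.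

(** The arc covering the state just before [y] starts outside [[x, y[] or at
    [x], so it covers all of [[x, y[]. *)
Lemma gap_sub_arc N (l : 'I_N -> nat) (B M : {set 'I_N}) (x y : nat) :
  (forall a, l a < N) -> \bigcup_(a in B) arc a (l a) = setT -> B \subset M ->
  y < N -> (forall z : 'I_N, z \in M -> z \in cint_ho N x y -> z = x :> nat) ->
  exists2 a, a \in B & cint_ho N x y \subset arc a (l a).
Proof.
move=> l_lt cover BM y_lt gap.
pose p := if y == 0 then N.-1 else y.-1.
have p_lt : p < N by rewrite /p; case: eqP; lia.
have p_y : (y = 0 /\ p.+1 = N) \/ (0 < y /\ p.+1 = y) by rewrite /p; case: eqP; lia.
have : Ordinal p_lt \in \bigcup_(a in B) arc a (l a) by rewrite cover inE.
case/bigcupP => a Ba pa; exists a => //; apply/subsetP => z z_in.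
have a_gap : a \in cint_ho N x y -> a = x :> nat by apply/gap/(subsetP BM).
move: pa; rewrite !inE /= => pa.
have := l_lt a; have := ltn_ord a; have := ltn_ord z.
have := cdist_cases N a p; have := cdist_cases N a z.
case: (boolP (a \in cint_ho N x y)) => [/a_gap|]; move: z_in; rewrite !inE;
  by case: (leqP x y) => /=; lia.
Qed.

Lemma reducesP N (D : 'I_N -> {set 'I_N}) A A' : reduces D A A' ->
  [/\ A' \subset A, \bigcup_(b in A') D b = \bigcup_(b in A) D b & irredundant D A'].
Proof.
elim=> {A A'} [A A_irr | A a A' Aa a_sub _ [sub_A' cover_A' irr_A']]; first by split.
split=> //; first exact: subset_trans sub_A' (subD1set A a).
have D1_idx : \bigcup_(b in A :\ a) D b = \bigcup_(b in A | b != a) D b.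
  by apply: eq_bigl => b; rewrite !inE andbC.
rewrite cover_A' [in RHS](bigD1 a) //= D1_idx; apply/esym/setUidPr.
by rewrite -D1_idx.
Qed.

Section Roundabout.

Variables (V : finType) (N : nat) (v : nat -> V) (H : nat -> {set {set V}}).

Lemma rstate_lt a tau : a < N -> rstate N v H a tau < N.
Proof.
move=> a_lt; elim: tau => [|tau IH] //=; case: ifP => _ //.
by have := succ_modn_cases IH; lia.
Qed.

Definition progress a tau := cdist N a (rstate N v H a tau).

Definition advances a tau : bool :=
  [set v (rstate N v H a tau); v (rstate N v H a tau).+1] \in H tau.+1.

Lemma visited_arc (a : 'I_N) tau : visited v H a tau = arc a (progress a tau).
Proof. exact/cint_arc/rstate_lt. Qed.

Lemma progressS a tau : a < N -> (progress a tau).+1 < N ->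
  progress a tau.+1 = progress a tau + advances a tau.
Proof.
move=> a_lt; rewrite /progress /advances /=.
have := rstate_lt tau a_lt; set q := rstate N v H a tau => q_lt.
case: ifP => _ /=; last by rewrite addn0.
have := succ_modn_cases q_lt; have := cdist_cases N a q.
by have := cdist_cases N a (q.+1 %% N); lia.
Qed.

Lemma progress_le a tau : a < N -> tau < N -> progress a tau <= tau.
Proof.
move=> a_lt; elim: tau => [|tau IH] tau_lt; first by rewrite /progress cdistnn.
have := IH (ltnW tau_lt); rewrite progressS //; last lia.
by case: advances; lia.
Qed.

Lemma progress_leS a tau : a < N -> tau.+1 < N -> progress a tau <= progress a tau.+1.
Proof.
move=> a_lt tau_lt; have := progress_le a_lt (ltnW tau_lt) => le_tau.
by rewrite progressS // ?leq_addr //; lia.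
Qed.

Variables (t : nat) (As : nat -> {set 'I_N}).
Hypothesis run : roundabout_run v H t As.

Lemma active_subS tau : 0 < tau <= t -> As tau \subset As tau.-1.
Proof. by move=> tau_in; have [] := reducesP (run.2 tau tau_in). Qed.

Lemma active_sub tau tau' : tau <= tau' <= t -> As tau' \subset As tau.
Proof.
case/andP=> le_tau; elim: tau' le_tau => [|tau' IH] le_tau le_t.
  by rewrite leqn0 in le_tau; rewrite (eqP le_tau).
have [lt_tau|] := leqP tau tau'; last by move=> ge; have -> : tau = tau'.+1 by lia.
by apply: subset_trans (IH lt_tau (ltnW le_t)); apply: (active_subS (tau := tau'.+1)); lia.
Qed.

Lemma active_irredundant tau : 0 < tau <= t ->
  irredundant (fun a => visited v H a tau) (As tau).
Proof. by move=> tau_in; have [] := reducesP (run.2 tau tau_in). Qed.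

(** Of two agents in the same state, the one that started closer has visited
    a subset of what the other has visited. *)
Lemma active_rstate_inj tau : tau <= t ->
  {in As tau &, injective (fun a : 'I_N => rstate N v H a tau)}.
Proof.
case: tau => [_ a a' _ _ /val_inj //|tau le_t] a a' Aa Aa' same.
have irr := active_irredundant (tau := tau.+1) le_t.
pose s : 'I_N := Ordinal (rstate_lt tau.+1 (ltn_ord a')).
have visited_s (c : 'I_N) : rstate N v H c tau.+1 = s -> visited v H c tau.+1 = arc c (cdist N c s).
  by move=> c_s; rewrite visited_arc /progress c_s.
have not_nested (c c' : 'I_N) : c \in As tau.+1 -> c' \in As tau.+1 -> c != c' ->
    ~~ (visited v H c tau.+1 \subset visited v H c' tau.+1).
  move=> Ac Ac' cc'; apply: contra (irr c Ac) => /subset_trans; apply.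
  by apply: bigcup_sup; rewrite !inE eq_sym cc'.
have vis_a := visited_s a same; have vis_a' := visited_s a' erefl.
apply/eqP; apply: contraT => a_a'.
have [le|/ltnW le] := leqP (cdist N a' s) (cdist N a s).
- have a'_a : a' != a by rewrite eq_sym.
  by case/negP: (not_nested a' a Aa' Aa a'_a); rewrite vis_a vis_a' arc_nested.
- by case/negP: (not_nested a a' Aa Aa' a_a'); rewrite vis_a vis_a' arc_nested.
Qed.

Hypothesis t_lt : t < N.

Lemma active_cover tau : tau <= t -> \bigcup_(a in As tau) visited v H a tau = setT.
Proof.
elim: tau => [|tau IH] le_t.
  rewrite run.1; apply/setP => q; rewrite !inE; apply/bigcupP; exists q => //.
  by rewrite visited_arc inE /progress cdistnn.
have [_ cover _] := reducesP (run.2 tau.+1 le_t).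
rewrite cover; apply/eqP; rewrite eqEsubset subsetT /= -(IH (ltnW le_t)).
apply/subsetP => q /bigcupP [a Aa qa]; apply/bigcupP; exists a => //.
move: qa; rewrite !visited_arc !inE => /leq_trans; apply.
by apply: progress_leS => //; lia.
Qed.

Lemma active_sub_gap (M : {set 'I_N}) (x y : nat) : As t \subset M -> y < N ->
  (forall z : 'I_N, z \in M -> z \in cint_ho N x y -> z = x :> nat) ->
  exists2 a, a \in As t & cint_ho N x y \subset visited v H a t.
Proof.
move=> sub_M y_lt gap.
have l_lt (a : 'I_N) : progress a t < N.
  exact: leq_ltn_trans (progress_le (ltn_ord a) t_lt) t_lt.
have cover : \bigcup_(a in As t) arc a (progress a t) = setT.
  by rewrite -(active_cover (leqnn t)); apply: eq_bigr => a _; rewrite visited_arc.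
have [a Aa sub] := gap_sub_arc l_lt cover sub_M y_lt gap.
by exists a; rewrite // visited_arc.
Qed.

End Roundabout.

Lemma card_bigcup_seq_le (I : Type) (T : finType) (r : seq I) (P : pred I)
    (F : I -> {set T}) :
  #|\bigcup_(i <- r | P i) F i| <= \sum_(i <- r | P i) #|F i|.
Proof.
elim/big_rec2: _ => [|i n S _ IH]; first by rewrite cards0.
by apply: leq_trans (leq_card_setU _ _) _; rewrite leq_add2l.
Qed.

Lemma card_blocked_le (V : finType) (T : {set {set V}}) r v (E : {set {set V}}) k :
  is_dfs_tour T r v -> deficient T k E ->
  #|[set q : 'I_(tourlen V) | [set v q; v q.+1] \notin E]| <= 2 * k.
Proof.
case=> _ _ tour_T twice def_E.
pose traversals e := [set q : 'I_(tourlen V) | [set v q; v q.+1] == e].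
apply: (@leq_trans #|\bigcup_(e in T :\: E) traversals e|).
  apply/subset_leq_card/subsetP => q; rewrite inE => qE.
  by apply/bigcupP; exists [set v q; v q.+1]; rewrite !inE ?qE ?tour_T.
apply: leq_trans (card_bigcup_seq_le _ _ _) _.
rewrite (eq_bigr (fun _ => 2)); last by move=> e; rewrite inE => /andP [_ /twice].
by rewrite sum_nat_const mulnC leq_pmul2l.
Qed.

Section ActiveAgents.

Variables (V : finType) (T : {set {set V}}) (r : V) (v : nat -> V).
Let N := tourlen V.
Variables (k : nat) (H : nat -> {set {set V}}) (t : nat) (As : nat -> {set 'I_N}).
Hypotheses (t_lt : t < N) (tour : is_dfs_tour T r v).
Hypothesis H_def : forall tau, 0 < tau <= t -> deficient T k (H tau).
Hypothesis run : roundabout_run v H t As.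

Lemma card_stuck_le tau : tau < t -> #|[set a in As t | ~~ advances N v H a tau]| <= 2 * k.
Proof.
move=> tau_lt; pose pos a : 'I_N := Ordinal (rstate_lt v H tau (ltn_ord a)).
have sub_tau : As t \subset As tau by apply: (active_sub run); rewrite ltnW //= leqnn.
rewrite -(@card_in_imset _ _ pos).
  apply: leq_trans (card_blocked_le tour (H_def (tau := tau.+1) _)); last by rewrite /= tau_lt.
  apply/subset_leq_card/subsetP => _ /imsetP [a a_in ->].
  by move: a_in; rewrite !inE => /andP [].
move=> a a'; rewrite !inE => /andP [Ba _] /andP [Ba' _] /(congr1 val) same.
exact: (active_rstate_inj run (ltnW tau_lt) (subsetP sub_tau a Ba) (subsetP sub_tau a' Ba') same).
Qed.

Lemma total_progress_ge tau : tau <= t ->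
  tau * #|As t| <= \sum_(a in As t) progress N v H a tau + 2 * k * tau.
Proof.
elim: tau => [|tau IH] le_t; first by rewrite mul0n.
have step : \sum_(a in As t) progress N v H a tau.+1 =
    \sum_(a in As t) progress N v H a tau + \sum_(a in As t) advances N v H a tau.
  rewrite -big_split; apply: eq_bigr => a _; apply: progressS => //.
  by have := progress_le v H (ltn_ord a) (ltn_trans le_t t_lt); lia.
have moved_or_stuck :
    \sum_(a in As t) advances N v H a tau + #|[set a in As t | ~~ advances N v H a tau]| = #|As t|.
  rewrite -!sum1_card [in RHS](bigID (fun a : 'I_N => advances N v H a tau)) /= big_mkcondr /=.
  by congr (_ + _); apply: eq_bigl => a; rewrite inE.
have := card_stuck_le le_t; have := IH (ltnW le_t); rewrite step; nia.
Qed.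

Lemma card_active_mul_le : 0 < t -> #|As t| * t.+1 <= 2 * N + 2 * k * t.
Proof.
move=> t_gt0.
have irr : irredundant (fun a => arc a (progress N v H a t)) (As t).
  have t_in : 0 < t <= t by rewrite t_gt0 leqnn.
  move=> a Ba; move: (active_irredundant run t_in Ba); rewrite visited_arc.
  by under eq_bigr do rewrite visited_arc.
have := sum_irredundant_arcs_le
  (fun a => leq_ltn_trans (progress_le v H (ltn_ord a) t_lt) t_lt) irr.
rewrite (eq_bigr (fun a : 'I_N => progress N v H a t + 1)) => [|a _]; last by rewrite addn1.
rewrite big_split /= sum1_card; have := total_progress_ge (leqnn t).
set S := \sum_(a in As t) _; set c := #|As t|; nia.
Qed.

End ActiveAgents.

Lemma card_active_le (V : finType) (T : {set {set V}}) r v k H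
    (As : nat -> {set 'I_(tourlen V)}) :
  0 < k -> is_dfs_tour T r v ->
  (forall tau, 0 < tau <= tourlen V %/ (2 * k) -> deficient T k (H tau)) ->
  roundabout_run v H (tourlen V %/ (2 * k)) As ->
  #|As (tourlen V %/ (2 * k))| <= 6 * k - 1.
Proof.
move=> k_gt0 tour H_def run; set N := tourlen V in As H_def run *.
set t := N %/ (2 * k) in H_def run *.
have [N0|N_gt0] := posnP N.
  by apply: leq_trans (max_card _) _; rewrite card_ord N0.
have t_lt : t < N by apply: ltn_Pdiv; lia.
have N_lt : N < t.+1 * (2 * k) by apply: ltn_ceil; lia.
have [t0|t_gt0] := posnP t.
  by rewrite t0 run.1 cardsT card_ord; rewrite t0 in N_lt; lia.
by have := card_active_mul_le t_lt tour H_def run t_gt0; rewrite -/N -/t; nia.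
Qed.

Lemma count_index_iota_le (p : pred nat) m d n :
  count p (index_iota m n) <= d + count p (index_iota (m + d) n).
Proof.
have [le|lt] := leqP (m + d) n.
  rewrite /index_iota (_ : n - m = d + (n - (m + d))); last lia.
  by rewrite iotaD count_cat leq_add2r (leq_trans (count_size _ _)) ?size_iota.
by apply: leq_trans (count_size _ _) _; rewrite size_iota; lia.
Qed.

Lemma epoch_graphs_deficient (V : finType) (T : {set {set V}}) k G b Delta i t tau :
  Delta + t <= count (fun x => deficient T k (G x)) (index_iota (b i) (b i.+1)) ->
  0 < tau <= t -> deficient T k (epoch_graphs T k G b Delta i tau).
Proof.
move=> enough /andP [tau_gt0 tau_le]; rewrite /epoch_graphs; set fl := filter _ _.
have fl_size : t <= size fl.
  by rewrite size_filter; have := count_index_iota_le (fun x => deficient T k (G x)) (b i) Delta (b i.+1); lia.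
have : nth 0 fl tau.-1 \in fl by rewrite mem_nth // prednK // (leq_trans tau_le).
by rewrite mem_filter => /andP [].
Qed.

Lemma intervals_gap N (M : {set 'I_N}) I : I \in intervals M ->
  exists x y, [/\ y < N, I = cint_ho N x y &
                forall z : 'I_N, z \in M -> z \in I -> z = x :> nat].
Proof.
rewrite /intervals; set ms := sort leq _; set d := size ms.
case/mapP => j; rewrite mem_iota add0n => /andP [_ j_lt] ->.
have ms_uniq : uniq ms by rewrite sort_uniq map_inj_uniq ?enum_uniq //; apply: val_inj.
have ms_sorted : sorted ltn ms.
  by rewrite ltn_sorted_uniq_leq ms_uniq sort_sorted //; apply: leq_total.
have ms_lt n : n \in ms -> n < N by rewrite mem_sort => /mapP [q _ ->].
have le_nth : {in gtn d &, {mono nth 0 ms : i1 i2 / i1 <= i2}}.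
  by apply: leq_mono_in; apply: (sorted_ltn_nth ltn_trans).
have j'_lt : j.+1 %% d < d by rewrite ltn_mod; lia.
exists (nth 0 ms j), (nth 0 ms (j.+1 %% d)).
split; [exact/ms_lt/mem_nth | by [] |].
move=> z z_M; have z_ms : nat_of_ord z \in ms by rewrite mem_sort map_f ?mem_enum.
have i_lt : index (nat_of_ord z) ms < d by rewrite index_mem.
rewrite !inE -(nth_index 0 z_ms) !le_nth ?inE // nth_uniq //.
move: (index _ _) i_lt => i i_lt in_gap; suff -> : i = j by [].
by have := succ_modn_cases j_lt; move: in_gap; case: (leqP j (j.+1 %% d)) => /=; lia.
Qed.

Lemma card_ffun_family (I T : finType) (F : I -> {set T}) :
  #|[set f : {ffun I -> T} | [forall i, f i \in F i]]| = \prod_i #|F i|.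
Proof.
rewrite -[RHS]big_enum /= -(big_map (fun x => #|F x|) xpredT id) -foldrE.
rewrite -(card_family (fun i => mem (F i))) cardsE.
by apply: eq_card => f; rewrite !inE; apply/forallP/familyP.
Qed.

Lemma prod_subn1_mul_le (I : finType) (F : I -> nat) m : (forall i, F i <= m) ->
  \prod_i (F i - 1) * m ^ #|I| <= (m - 1) ^ #|I| * \prod_i F i.
Proof.
move=> F_le; rewrite -!prod_nat_const -!big_split /=.
by apply: leq_prod => i _; have := F_le i; nia.
Qed.

Lemma card_avoiding_tuples_le (I T : finType) (S : I -> {set T}) (P : I -> pred T) :
  (forall i, exists2 a, a \in S i & P i a) ->
  #|[set f : {ffun I -> T} | [forall i, f i \in [set a in S i | ~~ P i a]]]|
    <= \prod_i (#|S i| - 1).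
Proof.
move=> S_P; rewrite card_ffun_family; apply: leq_prod => i _.
have [a Sa Pa] := S_P i.
have : [set a in S i | ~~ P i a] \proper S i.
  apply/properP; split; first by apply/subsetP => c; rewrite inE => /andP [].
  by exists a; rewrite // inE Pa andbF.
by move/proper_card; lia.
Qed.

Lemma card_covering_tuples (I T : finType) (X : eqType) (S : I -> {set T})
    (good : I -> X -> T -> bool) (xs : seq X) (m : nat) :
  0 < m -> (forall i, #|S i| <= m) ->
  (forall i x, x \in xs -> exists2 a, a \in S i & good i x a) ->
  12 * size xs * (m - 1) ^ #|I| <= 11 * m ^ #|I| ->
  #|[set f : {ffun I -> T} | [forall i, f i \in S i]]|
    <= 12 * #|[set f : {ffun I -> T} | [forall i, f i \in S i] &&
                 all (fun x => [exists i, good i x (f i)]) xs]|.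
Proof.
move=> m_gt0 S_le S_good margin.
set tuples := [set f | _]; set covering := [set f | _ && _].
pose missing x := [set f : {ffun I -> T} | [forall i, f i \in [set a in S i | ~~ good i x a]]].
set Q := \prod_i (#|S i| - 1).
have tuples_sub : tuples \subset covering :|: \bigcup_(x <- xs) missing x.
  apply/subsetP => f; rewrite !inE => f_in; rewrite f_in /=.
  have [//|/allPn [x x_in not_cov]] := boolP (all _ xs).
  rewrite (big_rem x x_in) /= !inE; apply/orP; left; apply/forallP => i.
  by rewrite !inE (forallP f_in i); apply: contra not_cov => g; apply/existsP; exists i.
have card_missing x : x \in xs -> #|missing x| <= Q.
  by move=> x_in; apply: card_avoiding_tuples_le => i; apply: S_good.
have card_union : #|\bigcup_(x <- xs) missing x| <= size xs * Q.
  apply: leq_trans (card_bigcup_seq_le _ _ _) _.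
  have -> : size xs * Q = \sum_(x <- xs) Q.
    by rewrite big_const_seq count_predT iter_addn_0 mulnC.
  by rewrite big_seq [X in _ <= X]big_seq; apply: leq_sum.
have card_tuples : #|tuples| = \prod_i #|S i| := card_ffun_family S.
have few_missing : 12 * (size xs * Q) <= 11 * #|tuples|.
  have m_pos : 0 < m ^ #|I| by rewrite expn_gt0 m_gt0.
  rewrite -(leq_pmul2r m_pos) card_tuples.
  have := prod_subn1_mul_le S_le; rewrite -/Q => ratio.
  have h1 : size xs * (Q * m ^ #|I|) <= size xs * ((m - 1) ^ #|I| * \prod_i #|S i|).
    by rewrite leq_mul2l ratio orbT.
  have h2 : 12 * size xs * (m - 1) ^ #|I| * \prod_i #|S i| <= 11 * m ^ #|I| * \prod_i #|S i|.
    by rewrite leq_mul2r margin orbT.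
  by move: h1 h2; set P := \prod_i _; set a := m ^ _; set b := (m - 1) ^ _; nia.
have := leq_trans (subset_leq_card tuples_sub) (leq_card_setU _ _).
by move: few_missing card_union; set c := #|covering|; lia.
Qed.

Lemma size_intervals N (M : {set 'I_N}) : size (intervals M) = #|M|.
Proof. by rewrite size_map size_iota size_sort size_map -cardE. Qed.

Theorem lemma12 (V : finType) (L k Delta rho : nat)
    (G : nat -> {set {set V}}) (T : {set {set V}}) (r : V) (v : nat -> V)
    (b : nat -> nat) (A : nat -> nat -> {set 'I_(tourlen V)}) :
  2 <= #|V| -> 1 <= k -> 1 <= Delta ->
  (forall tau, tau < L -> is_graph (G tau)) ->
  is_tree T -> T \subset \bigcup_(tau < L) G tau ->
  is_dfs_tour T r v ->
  is_rho k rho ->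
  b 0 = 0 -> (forall i, i < rho -> b i <= b i.+1) -> b rho <= L ->
  (forall i, i < rho ->
     Delta + tourlen V %/ (2 * k)
       <= count (fun x => deficient T k (G x)) (index_iota (b i) (b i.+1))) ->
  (forall i, i < rho ->
     roundabout_run v (epoch_graphs T k G b Delta i) (tourlen V %/ (2 * k)) (A i)) ->
  #|[set f : {ffun 'I_rho -> 'I_(tourlen V)} |
       [forall i : 'I_rho, f i \in A i (tourlen V %/ (2 * k))]]|
  <= 12 * #|[set f : {ffun 'I_rho -> 'I_(tourlen V)} |
       [forall i : 'I_rho, f i \in A i (tourlen V %/ (2 * k))] &&
       all (fun I : {set 'I_(tourlen V)} => [exists i : 'I_rho,
                        I \subset visited v (epoch_graphs T k G b Delta i) (f i)
                                    (tourlen V %/ (2 * k))])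
           (intervals (\bigcup_(i < rho) A i (tourlen V %/ (2 * k))))]|.
Proof.
move=> _ k_gt0 _ _ _ _ tour rho_def _ _ _ enough runs.
set N := tourlen V; set t := N %/ (2 * k).
have [m m_ge margin] := rho_margin k_gt0 rho_def.
have card_active (i : 'I_rho) : #|A i t| <= 6 * k - 1.
  apply: card_active_le k_gt0 tour _ (runs i (ltn_ord i)) => tau.
  exact: epoch_graphs_deficient (enough i (ltn_ord i)).
apply: (@card_covering_tuples _ _ _ (fun i : 'I_rho => A i t)
          (fun i (I : {set 'I_N}) a => I \subset visited v (epoch_graphs T k G b Delta i) a t) _ m).
- lia.
- by move=> i; apply: leq_trans (card_active i) m_ge.
- move=> i I /intervals_gap [x [y [y_lt -> gap]]].
  have t_lt : t < N by apply: ltn_Pdiv; lia.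
  have [a Aa sub] := active_sub_gap (runs i (ltn_ord i)) t_lt (bigcup_sup i isT) y_lt gap.
  by exists a.
- have card_M : #|\bigcup_(i < rho) A i t| <= rho * m.
    apply: leq_trans (card_bigcup_seq_le _ _ _) _.
    rewrite -[rho in rho * m]card_ord -sum_nat_const.
    by apply: leq_sum => i _; apply: leq_trans (card_active i) m_ge.
  rewrite card_ord size_intervals; move: card_M margin.
  by set c := #|_|; set p := m ^ rho; set q := (m - 1) ^ rho; nia.
Qed.
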